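(* Let $\psi(z)=\sum_{n\ge 0} b_n z^n\in\mathcal K$ have radius of convergence $R_\psi>0$. If $\psi\in\mathcal K^\star$ with apex $\tau\in(0,R_\psi)$, then the function $t\mapsto t/\psi(t)$ (1) is strictly increasing on $[0,\tau)$, (2) is strictly decreasing on $(\tau,R_\psi)$, and (3) attains its maximum at $t=\tau$. If $\psi\in\mathcal K\setminus\mathcal K^\star$, then $t\mapsto t/\psi(t)$ is strictly increasing on $(0,R_\psi)$.
   Context: $\mathcal K$ denotes the class of non-constant power series $f(z)=\sum_{n\ge0}a_nz^n$ with positive radius of convergence $R$, non-negative coefficients and $a_0>0$. The Khinchin family of $f\in\mathcal K$ is the family of random variables $(X_t)_{t\in[0,R)}$ with $\mathbf P(X_t=n)=a_nt^n/f(t)$ for $n\ge0$, $t\in(0,R)$, and $X_0\equiv0$; its mean is $m_f(t)=\mathbf E(X_t)=tf'(t)/f(t)$, which is increasing in $t$. $\mathcal K^\star$ is the subclass of $f\in\mathcal K$ with $\lim_{t\uparrow R}m_f(t)>1$; for such $f$ the apex is the unique $\tau\in(0,R)$ with $m_f(\tau)=1$. *)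

From Stdlib Require Import Reals.
From Coquelicot Require Import Coquelicot.
Open Scope R_scope.

Definition in_K (a : nat -> R) : Prop :=
  Rbar_lt 0 (CV_radius a) /\
  (forall n, 0 <= a n) /\
  0 < a 0%nat /\
  (exists n, (1 <= n)%nat /\ a n <> 0).


Definition mean_f (a : nat -> R) (t : R) : R :=
  t * Derive (PSeries a) t / PSeries a t.

Definition left_of (Rad : Rbar) : (R -> Prop) -> Prop :=
  match Rad with
  | Finite r => at_left r
  | p_infty => Rbar_locally p_infty
  | m_infty => Rbar_locally m_infty
  end.

Definition in_Kstar (a : nat -> R) : Prop :=
  in_K a /\
  exists l : Rbar,
    filterlim (mean_f a) (left_of (CV_radius a)) (Rbar_locally l) /\
    Rbar_lt 1 l.

From Stdlib Require Import Reals Lra Lia Classical.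
From Coquelicot Require Import Coquelicot.
Open Scope R_scope.

(* Write psi(t) = PSeries b t and m = mean_f b.  Then (t / psi(t))' = (1 - m(t)) / psi(t),
   so by the mean value theorem t / psi(t) increases where m < 1 and decreases where
   m > 1.  The mean m is strictly increasing on [0, R): for 0 <= s < t the partial sums
   of t psi'(t) psi(s) - s psi'(s) psi(t) equal
     sum_{j<k} b_j b_k (k - j) (t^k s^j - s^k t^j),
   a sum of nonnegative terms, one of which is b_0 b_n n (t^n - s^n) > 0.  Hence m < 1
   before the apex and m > 1 after it.  If psi is not in K*, m stays below 1, since a
   value m(t) > 1 would force the monotone limit of m at R to exceed 1. *)

Lemma Rbar_lt_of_le (x y : R) (z : Rbar) : x <= y -> Rbar_lt y z -> Rbar_lt x z.
Proof. intro Hxy; apply Rbar_le_lt_trans; exact Hxy. Qed.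

#[global] Instance left_of_filter (Rad : Rbar) : Filter (left_of Rad).
Proof. destruct Rad; simpl; exact _. Qed.

Lemma left_of_near (Rad : Rbar) (x0 : R) :
  Rbar_lt x0 Rad -> left_of Rad (fun x => x0 < x /\ Rbar_lt x Rad).
Proof.
  destruct Rad as [r| |]; simpl; intro Hx0; try contradiction.
  - assert (Hd : 0 < r - x0) by lra.
    exists (mkposreal _ Hd); simpl; intros y Hy Hyr.
    apply Rabs_lt_between' in Hy; split; lra.
  - exists x0; intros x Hx; split; [lra | exact I].
Qed.

Lemma filterlim_left_of_nondecreasing (h : R -> R) (x0 : R) (Rad : Rbar) :
  Rbar_lt x0 Rad ->
  (forall x y, x0 <= x -> x <= y -> Rbar_lt y Rad -> h x <= h y) ->
  filterlim h (left_of Rad)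
    (Rbar_locally (Lub_Rbar (fun z => exists x, x0 <= x /\ Rbar_lt x Rad /\ z = h x))).
Proof.
  intros Hx0 Hmono.
  set (E := fun z => exists x, x0 <= x /\ Rbar_lt x Rad /\ z = h x).
  generalize (Lub_Rbar_correct E); generalize (Lub_Rbar E); intros l [Hub Hlub].
  assert (Heventually : forall y : R, Rbar_lt y l ->
            left_of Rad (fun x => y < h x /\ Rbar_le (h x) l)).
  { intros y Hy.
    destruct (classic (exists x1, x0 <= x1 /\ Rbar_lt x1 Rad /\ y < h x1))
      as [(x1 & Hx1 & Hx1R & Hyx1) | Hnone].
    - apply (filter_imp (fun x => x1 < x /\ Rbar_lt x Rad)); [|exact (left_of_near _ _ Hx1R)].
      intros x [Hx Hxr]; split.
      + pose proof (Hmono x1 x Hx1 (Rlt_le _ _ Hx) Hxr); lra.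
      + apply Hub; exists x; repeat split; auto; lra.
    - exfalso; apply (Rbar_lt_not_le _ _ Hy), Hlub.
      intros z (x & Hx & HxR & ->); simpl.
      apply Rnot_lt_le; intro; apply Hnone; eauto. }
  destruct l as [lv| |].
  - apply (filterlim_locally h lv); intro eps.
    assert (Hy : Rbar_lt (lv - eps) lv) by (simpl; destruct eps; simpl; lra).
    refine (filter_imp _ _ _ (Heventually _ Hy)); intros x [H1 H2].
    apply Rabs_lt_between'; simpl in H2; destruct eps; simpl in *; lra.
  - intros P [M HM].
    apply (filter_imp _ _ (fun x Hx => HM _ (proj1 Hx)) (Heventually M I)).
  - exfalso; apply (Hub (h x0)); exists x0; repeat split; auto; lra.
Qed.

Lemma pow_lt_pow_l (s t : R) (n : nat) : 0 <= s -> s < t -> (1 <= n)%nat -> s ^ n < t ^ n.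
Proof.
  intros Hs Hst Hn; induction Hn as [|n Hn IH]; simpl; [lra|].
  assert (0 <= s ^ n) by (apply pow_le; lra); nra.
Qed.

Lemma pow_cross_le (s t : R) (k M : nat) :
  0 <= s <= t -> (k <= M)%nat -> s ^ M * t ^ k <= t ^ M * s ^ k.
Proof.
  intros Hst HkM; replace M with (k + (M - k))%nat by lia; rewrite !pow_add.
  assert (0 <= s ^ k * t ^ k) by (apply Rmult_le_pos; apply pow_le; lra).
  assert (s ^ (M - k) <= t ^ (M - k)) by (apply pow_incr; lra).
  nra.
Qed.

Definition psum (a : nat -> R) (x : R) (N : nat) : R := sum_f_R0 (fun k => a k * x ^ k) N.

Definition dpsum (a : nat -> R) (x : R) (N : nat) : R :=
  sum_f_R0 (fun k => INR k * a k * x ^ k) N.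

Lemma is_lim_seq_psum_of_is_pseries (a : nat -> R) (x l : R) :
  is_pseries a x l -> is_lim_seq (psum a x) l.
Proof.
  intro H; eapply filterlim_ext; [|exact H]; intro N; simpl.
  rewrite sum_n_Reals; apply sum_eq; intros i _.
  rewrite pow_n_pow; unfold scal; simpl; unfold mult; simpl; ring.
Qed.

Section CrossSums.
Variable a : nat -> R.
Hypothesis a_nonneg : forall n, 0 <= a n.
Variables s t : R.
Hypothesis s_nonneg : 0 <= s.
Hypothesis s_le_t : s <= t.

Definition cross (N : nat) : R := dpsum a t N * psum a s N - dpsum a s N * psum a t N.

Definition cross_step (M N : nat) : R :=
  sum_f_R0 (fun k => a k * (INR M - INR k) * (t ^ M * s ^ k - s ^ M * t ^ k)) N.

Lemma cross_step_eq (M N : nat) :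
  cross_step M N = INR M * (t ^ M * psum a s N - s ^ M * psum a t N)
                   + s ^ M * dpsum a t N - t ^ M * dpsum a s N.
Proof.
  unfold cross_step, psum, dpsum.
  induction N as [|N IH]; simpl sum_f_R0; [simpl; ring | rewrite IH; ring].
Qed.

Lemma cross_S (N : nat) : cross (S N) = cross N + a (S N) * cross_step (S N) N.
Proof.
  rewrite cross_step_eq; unfold cross, psum, dpsum; rewrite !tech5; ring.
Qed.

Lemma cross_step_ge (M N : nat) :
  (N < M)%nat -> a 0%nat * INR M * (t ^ M - s ^ M) <= cross_step M N.
Proof.
  unfold cross_step; induction N as [|N IH]; intro HNM.
  - simpl; right; ring.
  - rewrite tech5.
    assert (INR (S N) <= INR M) by (apply le_INR; lia).
    assert (s ^ M * t ^ S N <= t ^ M * s ^ S N) by (apply pow_cross_le; lia || lra).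
    assert (0 <= a (S N) * (INR M - INR (S N)) * (t ^ M * s ^ S N - s ^ M * t ^ S N)).
    { apply Rmult_le_pos; [apply Rmult_le_pos|]; auto; lra. }
    specialize (IH ltac:(lia)); lra.
Qed.

Lemma cross_step_nonneg (N : nat) : 0 <= cross_step (S N) N.
Proof.
  eapply Rle_trans; [|apply cross_step_ge; lia].
  assert (s ^ S N <= t ^ S N) by (apply pow_incr; lra).
  apply Rmult_le_pos; [apply Rmult_le_pos; [auto | apply pos_INR] | lra].
Qed.

Lemma cross_le (n N : nat) : (n <= N)%nat -> cross n <= cross N.
Proof.
  induction 1 as [|N _ IH]; [lra|]; rewrite cross_S.
  pose proof (Rmult_le_pos _ _ (a_nonneg (S N)) (cross_step_nonneg N)); lra.
Qed.

Lemma cross_ge_lead (n : nat) :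
  (1 <= n)%nat -> a n * (a 0%nat * INR n * (t ^ n - s ^ n)) <= cross n.
Proof.
  intro Hn; destruct n as [|n]; [lia|]; rewrite cross_S.
  assert (cross 0 = 0) by (unfold cross, psum, dpsum; simpl; ring).
  pose proof (cross_le 0 n ltac:(lia)).
  pose proof (Rmult_le_compat_l _ _ _ (a_nonneg (S n)) (cross_step_ge (S n) n ltac:(lia))).
  lra.
Qed.

End CrossSums.

Section KhinchinMean.
Variable a : nat -> R.
Hypothesis a_in_K : in_K a.

Let a_nonneg : forall n, 0 <= a n.
Proof. apply a_in_K. Qed.

Let abs_in_radius (x : R) :
  0 <= x -> Rbar_lt x (CV_radius a) -> Rbar_lt (Rabs x) (CV_radius a).
Proof. intros; rewrite Rabs_pos_eq; auto. Qed.

Lemma is_lim_seq_psum (x : R) :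
  0 <= x -> Rbar_lt x (CV_radius a) -> is_lim_seq (psum a x) (PSeries a x).
Proof.
  intros; apply is_lim_seq_psum_of_is_pseries, PSeries_correct, CV_radius_inside; auto.
Qed.

Lemma is_lim_seq_dpsum (x : R) :
  0 <= x -> Rbar_lt x (CV_radius a) ->
  is_lim_seq (dpsum a x) (x * Derive (PSeries a) x).
Proof.
  intros Hx HxR; rewrite Derive_PSeries by auto.
  assert (H : is_pseries (PS_derive a) x (PSeries (PS_derive a) x)).
  { apply PSeries_correct, CV_radius_inside; rewrite CV_radius_derive; auto. }
  apply is_pseries_incr_1, is_lim_seq_psum_of_is_pseries in H.
  eapply is_lim_seq_ext; [|exact H]; intro N.
  apply sum_eq; intros [|i] _; simpl; [unfold zero; simpl; ring | reflexivity].
Qed.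

Lemma PSeries_pos (x : R) : 0 <= x -> Rbar_lt x (CV_radius a) -> 0 < PSeries a x.
Proof.
  intros Hx HxR.
  assert (Hge : forall N, a 0%nat <= psum a x N).
  { unfold psum; induction N as [|N IH]; [simpl; lra|]; rewrite tech5.
    pose proof (Rmult_le_pos _ _ (a_nonneg (S N)) (pow_le x (S N) Hx)); lra. }
  pose proof (is_lim_seq_le _ _ _ _ Hge (is_lim_seq_const _) (is_lim_seq_psum x Hx HxR)).
  destruct a_in_K as (_ & _ & Ha0 & _); simpl in *; lra.
Qed.

Lemma mean_f_lt (s t : R) :
  0 <= s -> s < t -> Rbar_lt t (CV_radius a) -> mean_f a s < mean_f a t.
Proof.
  intros Hs Hst Ht.
  assert (HsR : Rbar_lt s (CV_radius a)) by (apply (Rbar_lt_of_le _ t); auto; lra).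
  pose proof (PSeries_pos s Hs HsR); pose proof (PSeries_pos t ltac:(lra) Ht).
  set (D := t * Derive (PSeries a) t * PSeries a s - s * Derive (PSeries a) s * PSeries a t).
  assert (Hlim : is_lim_seq (cross a s t) D).
  { pose proof (is_lim_seq_psum s Hs HsR); pose proof (is_lim_seq_dpsum s Hs HsR).
    pose proof (is_lim_seq_psum t ltac:(lra) Ht); pose proof (is_lim_seq_dpsum t ltac:(lra) Ht).
    apply is_lim_seq_minus'; apply is_lim_seq_mult'; assumption. }
  destruct a_in_K as (_ & _ & Ha0 & n & Hn & Han).
  set (c := a n * (a 0%nat * INR n * (t ^ n - s ^ n))).
  assert (Hc : 0 < c).
  { pose proof (a_nonneg n); pose proof (pow_lt_pow_l s t n Hs Hst Hn).
    assert (0 < INR n) by (apply lt_0_INR; lia).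
    apply Rmult_lt_0_compat; [lra|]; apply Rmult_lt_0_compat; [nra | lra]. }
  assert (HcD : Rbar_le c D).
  { apply (is_lim_seq_le_loc (fun _ => c) (cross a s t)); auto using is_lim_seq_const.
    exists n; intros N HN; eapply Rle_trans;
      [apply cross_ge_lead | apply cross_le]; auto; lra. }
  simpl in HcD.
  assert (E : mean_f a t - mean_f a s = D / (PSeries a s * PSeries a t))
    by (unfold mean_f, D; field; lra).
  assert (0 < D / (PSeries a s * PSeries a t)) by (apply Rdiv_lt_0_compat; nra).
  lra.
Qed.

Lemma is_derive_ratio (x : R) :
  0 <= x -> Rbar_lt x (CV_radius a) ->
  is_derive (fun y => y / PSeries a y) x ((1 - mean_f a x) / PSeries a x).
Proof.
  intros Hx HxR; pose proof (PSeries_pos x Hx HxR).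
  replace ((1 - mean_f a x) / PSeries a x)
    with ((1 * PSeries a x - x * Derive (PSeries a) x) / PSeries a x ^ 2)
    by (unfold mean_f; field; lra).
  apply is_derive_div; [apply (is_derive_id x) | | lra].
  apply Derive_correct, ex_derive_PSeries; auto.
Qed.

Lemma ratio_mvt (s t : R) :
  0 <= s -> s < t -> Rbar_lt t (CV_radius a) ->
  exists c, s < c < t /\
    t / PSeries a t - s / PSeries a s = (1 - mean_f a c) / PSeries a c * (t - s).
Proof.
  intros Hs Hst Ht.
  destruct (MVT_cor2 (fun y => y / PSeries a y) (fun c => (1 - mean_f a c) / PSeries a c) s t)
    as (c & Hc & Hsct); auto.
  - intros c Hc; apply is_derive_Reals, is_derive_ratio; [lra|].
    apply (Rbar_lt_of_le _ t); auto; lra.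
  - exists c; auto.
Qed.

Lemma ratio_lt_of_mean_lt_1 (s t : R) :
  0 <= s -> s < t -> Rbar_lt t (CV_radius a) ->
  (forall c, s < c < t -> mean_f a c < 1) ->
  s / PSeries a s < t / PSeries a t.
Proof.
  intros Hs Hst Ht Hmean; destruct (ratio_mvt s t Hs Hst Ht) as (c & Hc & E).
  assert (0 < PSeries a c) by (apply PSeries_pos; [|apply (Rbar_lt_of_le _ t)]; auto; lra).
  assert (0 < (1 - mean_f a c) / PSeries a c)
    by (apply Rdiv_lt_0_compat; auto; specialize (Hmean c Hc); lra).
  nra.
Qed.

Lemma ratio_gt_of_mean_gt_1 (s t : R) :
  0 <= s -> s < t -> Rbar_lt t (CV_radius a) ->
  (forall c, s < c < t -> 1 < mean_f a c) ->
  t / PSeries a t < s / PSeries a s.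
Proof.
  intros Hs Hst Ht Hmean; destruct (ratio_mvt s t Hs Hst Ht) as (c & Hc & E).
  assert (0 < PSeries a c) by (apply PSeries_pos; [|apply (Rbar_lt_of_le _ t)]; auto; lra).
  assert (0 < (mean_f a c - 1) / PSeries a c)
    by (apply Rdiv_lt_0_compat; auto; specialize (Hmean c Hc); lra).
  assert (E' : (1 - mean_f a c) / PSeries a c = - ((mean_f a c - 1) / PSeries a c))
    by (field; lra).
  rewrite E' in E; nra.
Qed.

Lemma in_Kstar_of_mean_gt_1 (t : R) :
  0 <= t -> Rbar_lt t (CV_radius a) -> 1 < mean_f a t -> in_Kstar a.
Proof.
  intros Ht HtR Hmean; split; [exact a_in_K|].
  eexists; split.
  - apply (filterlim_left_of_nondecreasing _ 0); [apply a_in_K|].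
    intros x y Hx Hxy HyR; destruct Hxy as [Hxy | ->]; [|lra].
    left; apply mean_f_lt; auto.
  - apply (Rbar_lt_le_trans _ (mean_f a t)); [exact Hmean|].
    apply (Lub_Rbar_correct _); exists t; auto.
Qed.

End KhinchinMean.

Theorem lemma4p1 (b : nat -> R) :
  in_K b ->
  (forall tau : R,
     in_Kstar b ->
     0 < tau -> Rbar_lt tau (CV_radius b) -> mean_f b tau = 1 ->
     (* (1) strictly increasing on [0, tau) *)
     (forall s t, 0 <= s -> s < t -> t < tau ->
        s / PSeries b s < t / PSeries b t) /\
     (* (2) strictly decreasing on (tau, R) *)
     (forall s t, tau < s -> s < t -> Rbar_lt t (CV_radius b) ->
        t / PSeries b t < s / PSeries b s) /\
     (* (3) maximum at tau *)
     (forall t, 0 <= t -> Rbar_lt t (CV_radius b) ->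
        t / PSeries b t <= tau / PSeries b tau)) /\
  (~ in_Kstar b ->
     forall s t, 0 < s -> s < t -> Rbar_lt t (CV_radius b) ->
        s / PSeries b s < t / PSeries b t).
Proof.
  intro HK; split.
  - intros tau _ Htau HtauR Hmean.
    assert (Hinc : forall s t, 0 <= s -> s < t -> t <= tau ->
                     s / PSeries b s < t / PSeries b t).
    { intros s t Hs Hst Ht; apply ratio_lt_of_mean_lt_1; auto.
      - apply (Rbar_lt_of_le _ tau); auto; lra.
      - intros c Hc; rewrite <- Hmean; apply mean_f_lt; auto; lra. }
    assert (Hdec : forall s t, tau <= s -> s < t -> Rbar_lt t (CV_radius b) ->
                     t / PSeries b t < s / PSeries b s).
    { intros s t Hs Hst Ht; apply ratio_gt_of_mean_gt_1; auto; [lra|].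
      intros c Hc; rewrite <- Hmean; apply mean_f_lt; auto; [lra | lra |].
      apply (Rbar_lt_of_le _ t); auto; lra. }
    split; [|split]; [intros; apply Hinc; auto; lra | intros; apply Hdec; auto; lra |].
    intros t Ht HtR; destruct (Rtotal_order t tau) as [H | [-> | H]].
    + left; apply Hinc; auto; lra.
    + right; reflexivity.
    + left; apply Hdec; auto; lra.
  - intros HnotKstar s t Hs Hst Ht; apply ratio_lt_of_mean_lt_1; auto; [lra|].
    intros c Hc; apply Rnot_le_lt; intro Hc1; apply HnotKstar.
    apply (in_Kstar_of_mean_gt_1 b HK t); [lra | exact Ht|].
    pose proof (mean_f_lt b HK c t ltac:(lra) (proj2 Hc) Ht); lra.
Qed.
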